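(* Let $n\ge 3$, let $q_1,\dots,q_n,r_1,\dots,r_n$ be positive integers, and let $H$ be a finite simple graph without a universal vertex. Then $${\rm dim}_s\big(K_{n,n}^{-M}(q_1,\dots,q_n,r_1,\dots,r_n)\diamond H\big)=\sum_{i=1}^{n}\Big((q_i+r_i)\sum_{j=1}^{k(H)}t_j(H)\Big)-n\,k(H).$$
   Context: The modular product $G\diamond H$ has vertex set $V(G)\times V(H)$; distinct vertices $(g,h)$ and $(g',h')$ are adjacent iff ($g=g'$ and $hh'\in E(H)$), or ($gg'\in E(G)$ and $h=h'$), or ($gg'\in E(G)$ and $hh'\in E(H)$), or ($g\neq g'$, $h\neq h'$, $gg'\notin E(G)$ and $hh'\notin E(H)$). $K_{n,n}^{-M}(q_1,\dots,q_n,r_1,\dots,r_n)$ is the graph whose vertex set is a disjoint union of sets $X_1,\dots,X_n,Y_1,\dots,Y_n$ with $|X_i|=q_i$, $|Y_i|=r_i$, where each $X_i$ and each $Y_i$ induces a clique, every vertex of $X_i$ is adjacent to every vertex of $Y_j$ whenever $i\neq j$, and there are no other edges (when all $q_i=r_i=1$ this is $K_{n,n}$ minus a perfect matching, denoted $K_{n,n}^{-M}$). A vertex is universal if its closed neighborhood is the whole vertex set. Vertices $h,h'$ are twins if $N_H[h]=N_H[h']$ (an equivalence relation). A $\gamma_H$-pair is a set $\{h,h'\}$ of two distinct vertices with $N_H[h]\cap N_H[h']=\emptyset$ and $N_H[h]\cup N_H[h']=V(H)$. Let $T_1(H),\dots,T_{k(H)}(H)$ be the following partition of $V(H)$: each twin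 class of vertices not belonging to any $\gamma_H$-pair is one part, and for each $\gamma_H$-pair $\{h,h'\}$ the union of the twin class of $h$ and the twin class of $h'$ is one part; $k(H)$ is the number of parts and $t_j(H)=|T_j(H)|$. For a connected graph $X$, a vertex $z$ strongly resolves distinct vertices $x,y$ if $d_X(y,z)=d_X(y,x)+d_X(x,z)$ or $d_X(x,z)=d_X(x,y)+d_X(y,z)$; ${\rm dim}_s(X)$ is the minimum cardinality of a set $S\subseteq V(X)$ such that every pair of distinct vertices is strongly resolved by some vertex of $S$. *)

From mathcomp Require Import all_boot.
Set Implicit Arguments. Unset Strict Implicit. Unset Printing Implicit Defensive.

Definition simple_graph (T : finType) (e : rel T) : Prop :=
  symmetric e /\ irreflexive e.

Definition cnbh (T : finType) (e : rel T) (x : T) : {set T} :=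
  [set y | (y == x) || e x y].

Definition universal (T : finType) (e : rel T) (x : T) : bool :=
  cnbh e x == [set: T].

Definition modprod (G H : finType) (eG : rel G) (eH : rel H) : rel (G * H) :=
  fun u v =>
    let: (g, h) := u in let: (g', h') := v in
    (u != v) &&
    [|| (g == g') && eH h h',
        eG g g' && (h == h'),
        eG g g' && eH h h'
      | [&& g != g', h != h', ~~ eG g g' & ~~ eH h h']].

(* The graph K_{n,n}^{-M}(q_1..q_n, r_1..r_n): vertex type T partitioned by a
   label lab : T -> bool * 'I_n; (false, i) is the block X_i, (true, i) is Y_i. *)
Definition KnnM_graph (n : nat) (T : finType) (lab : T -> bool * 'I_n) : rel T :=
  fun x y => (x != y) &&
    ((lab x == lab y) || (((lab x).1 != (lab y).1) && ((lab x).2 != (lab y).2))).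

Definition is_KnnM (n : nat) (q r : 'I_n -> nat) (T : finType) (e : rel T) : Prop :=
  exists lab : T -> bool * 'I_n,
    [/\ forall i, #|[set x | lab x == (false, i)]| = q i,
        forall i, #|[set x | lab x == (true, i)]| = r i
      & e =2 KnnM_graph lab].

(* Reachability within k steps, and graph distance (shortest path length);
   for unreachable pairs the distance is the sentinel #|T| (only connected
   graphs are relevant). *)
Fixpoint nreach (T : finType) (e : rel T) (k : nat) (x y : T) : bool :=
  match k with
  | 0 => x == y
  | k'.+1 => nreach e k' x y || [exists z, nreach e k' x z && e z y]
  end.

Definition dist (T : finType) (e : rel T) (x y : T) : nat :=
  find (fun k => nreach e k x y) (iota 0 #|T|).

Definition strongly_resolves (T : finType) (e : rel T) (z x y : T) : bool :=
  (dist e y z == dist e y x + dist e x z) || (dist e x z == dist e x y + dist e y z).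

Definition strong_resolving_set (T : finType) (e : rel T) (S : {set T}) : bool :=
  [forall x, forall y, (x != y) ==> [exists z in S, strongly_resolves e z x y]].

Definition sdim (T : finType) (e : rel T) : nat :=
  \big[minn/#|T|]_(S : {set T} | strong_resolving_set e S) #|S|.

Definition twin_class (T : finType) (e : rel T) (h : T) : {set T} :=
  [set x | cnbh e x == cnbh e h].

Definition gamma_pair (T : finType) (e : rel T) (h h' : T) : bool :=
  [&& h != h', cnbh e h :&: cnbh e h' == set0 & cnbh e h :|: cnbh e h' == [set: T]].

Definition part_of (T : finType) (e : rel T) (h : T) : {set T} :=
  twin_class e h :|: \bigcup_(h' | gamma_pair e h h') twin_class e h'.

Definition Tpartition (T : finType) (e : rel T) : {set {set T}} :=
  [set part_of e h | h in T].

Definition kH (T : finType) (e : rel T) : nat := #|Tpartition e|.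

(* In G <> H the closed neighbourhoods multiply: (g', h') is in N[(g, h)] iff
   [g' in N[g]] = [h' in N[h]]; for G = K_{n,n}^{-M} the first bit depends only
   on the blocks of g and g'.  Since n >= 3 every two vertices are at distance at
   most 3, and distance 3 occurs exactly for "antipodal" pairs: same block with
   complementary neighbourhoods in H, or matched blocks X_i, Y_i with equal
   neighbourhoods.  If two vertices have the same block index and H-coordinates
   in the same part T_j(H), they are either antipodal or at equal distance from
   every third vertex, so nothing else strongly resolves them: a strong resolving
   set misses at most one vertex per pair (index, part).  Conversely, leaving out
   one vertex of X_i x T_j(H) for every i and j gives a strong resolving set, since
   any two left-out vertices are strongly resolved by a suitable vertex of the
   Y side. *)

From HB Require Import structures.
From mathcomp Require Import all_boot zify.

Set Implicit Arguments. Unset Strict Implicit. Unset Printing Implicit Defensive.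

HB.instance Definition _ := SemiGroup.isComLaw.Build nat minn minnA minnC.

Lemma find_iota_first (p : pred nat) k N :
  k < N -> p k -> (forall j, j < k -> ~~ p j) -> find p (iota 0 N) = k.
Proof.
move=> ltkN pk before_k; apply/eqP; rewrite eqn_leq.
have has_p : has p (iota 0 N) by apply/hasP; exists k; rewrite ?mem_iota.
apply/andP; split; rewrite leqNgt; apply/negP => lt.
  by have := before_find 0 lt; rewrite nth_iota // pk.
have lt_find : find p (iota 0 N) < N by move: has_p; rewrite has_find size_iota.
by have := nth_find 0 has_p; rewrite nth_iota // add0n; apply/negP/before_k.
Qed.

Lemma set_neqP (T : finType) (A B : {set T}) :
  reflect (exists x, (x \in A) != (x \in B)) (A != B).
Proof.
apply: (iffP idP) => [neqAB|[x]]; last by apply: contraNneq => ->.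
apply/existsP; apply: contraNT neqAB; rewrite negb_exists => /forallP eqAB.
by apply/eqP/setP => x; apply/eqP/negPn/eqAB.
Qed.

Section Distance.
Variables (T : finType) (e : rel T).

Lemma nreachS k x y :
  nreach e k.+1 x y = [exists z, nreach e k x z && (y \in cnbh e z)].
Proof.
rewrite /=; apply/orP/existsP.
  case=> [reach|/existsP[z /andP[reach ezy]]]; first by exists y; rewrite reach inE eqxx.
  by exists z; rewrite reach inE ezy orbT.
case=> z /andP[reach]; rewrite inE => /orP[/eqP->|ezy]; first by left.
by right; apply/existsP; exists z; rewrite reach.
Qed.

Lemma nreach1 x y : nreach e 1 x y = (y \in cnbh e x).
Proof.
rewrite nreachS; apply/existsP/idP => [[z /andP[/eqP->]]|] //.
by exists x; rewrite /= eqxx.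
Qed.

Lemma nreach2 x y :
  nreach e 2 x y = [exists z, (z \in cnbh e x) && (y \in cnbh e z)].
Proof. by rewrite nreachS; apply: eq_existsb => z; rewrite nreach1. Qed.

Lemma nreach_leq j k x y : j <= k -> nreach e j x y -> nreach e k x y.
Proof.
move=> /subnK <- reach; elim: (k - j) => // d IH.
by rewrite addSn /= IH.
Qed.

Lemma dist_refl x : dist e x x = 0.
Proof. by apply: find_iota_first => //=; apply/card_gt0P; exists x. Qed.

Lemma dist_gt0 x y : x != y -> 0 < dist e x y.
Proof.
rewrite /dist; have : 0 < #|T| by apply/card_gt0P; exists x.
by case: #|T| => // N _ /negbTE neq_xy /=; rewrite neq_xy.
Qed.

Lemma dist_succ k x y :
  k.+1 < #|T| -> nreach e k.+1 x y -> ~~ nreach e k x y -> dist e x y = k.+1.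
Proof.
move=> lt_k reach not_reach; apply: find_iota_first => // j lt_j.
by apply: contra not_reach; apply: nreach_leq.
Qed.

Lemma strongly_resolves_refl x y : strongly_resolves e x x y.
Proof. by rewrite /strongly_resolves dist_refl addn0 eqxx. Qed.

Lemma strongly_resolves_refl_r x y : strongly_resolves e y x y.
Proof. by rewrite /strongly_resolves dist_refl addn0 eqxx orbT. Qed.

Lemma not_strongly_resolves_eq_dist z x y :
  0 < dist e x y -> 0 < dist e y x -> dist e x z = dist e y z ->
  ~~ strongly_resolves e z x y.
Proof. by rewrite /strongly_resolves; lia. Qed.

Lemma not_strongly_resolves_diametral m z x y :
  (forall a b, dist e a b <= m) -> dist e x y = m -> dist e y x = m ->
  z != x -> z != y -> ~~ strongly_resolves e z x y.
Proof.
move=> le_m dxy dyx zx zy; rewrite /strongly_resolves.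
rewrite eq_sym in zx; rewrite eq_sym in zy.
have := dist_gt0 zx; have := dist_gt0 zy.
by have := le_m x z; have := le_m y z; lia.
Qed.

Lemma strong_resolving_setC (I : {set T}) :
  (forall x y, x \in I -> y \in I -> x != y ->
     exists2 z, z \notin I & strongly_resolves e z x y) ->
  strong_resolving_set e (~: I).
Proof.
move=> resolved; apply/forallP => x; apply/forallP => y; apply/implyP => xy.
have [xI|xI] := boolP (x \in I); last first.
  by apply/existsP; exists x; rewrite inE xI strongly_resolves_refl.
have [yI|yI] := boolP (y \in I); last first.
  by apply/existsP; exists y; rewrite inE yI strongly_resolves_refl_r.
by have [z zI res] := resolved x y xI yI xy; apply/existsP; exists z; rewrite inE zI.
Qed.

Lemma strong_resolving_setT : strong_resolving_set e [set: T].
Proof. by rewrite -setC0; apply: strong_resolving_setC => x y; rewrite inE. Qed.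

Lemma strong_resolving_compl_inj (aT : eqType) (f : T -> aT) S :
  strong_resolving_set e S ->
  (forall u v z, u != v -> f u = f v -> z != u -> z != v ->
     ~~ strongly_resolves e z u v) ->
  {in ~: S &, injective f}.
Proof.
move=> /forallP resS unresolved u v; rewrite !inE => uS vS fuv.
apply/eqP; apply: contraT => uv.
have /existsP[z /andP[zS res]] := implyP (forallP (resS u) v) uv.
have zu : z != u by apply: contraNneq uS => <-.
have zv : z != v by apply: contraNneq vS => <-.
by have := unresolved u v z uv fuv zu zv; rewrite res.
Qed.

Lemma sdim_eq m :
  (forall S, strong_resolving_set e S -> m <= #|S|) ->
  (exists2 S, strong_resolving_set e S & #|S| <= m) -> sdim e = m.
Proof.
move=> lower [S0 resS0 leS0]; apply/eqP; rewrite eqn_leq; apply/andP; split.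
  by rewrite /sdim (bigD1 S0) //= (leq_trans (geq_minl _ _)).
apply: (big_ind (leq m)) => [|a b ma mb|S /lower] //; last by rewrite leq_min ma.
by rewrite -cardsT; apply/lower/strong_resolving_setT.
Qed.

End Distance.

Section ClosedNeighbourhoods.
Variables (T : finType) (e : rel T).
Local Notation N := (cnbh e).

Lemma cnbh_id x : x \in N x.
Proof. by rewrite inE eqxx. Qed.

Lemma mem_cnbhC : symmetric e -> forall x y, (y \in N x) = (x \in N y).
Proof. by move=> e_sym x y; rewrite !inE eq_sym e_sym. Qed.

Lemma gamma_pairE h h' : gamma_pair e h h' = (N h' == ~: N h).
Proof.
apply/and3P/eqP => [[_ /eqP disj /eqP cover]|Nh'].
  apply/setP => y; rewrite in_setC.
  have /setP/(_ y) := disj; have /setP/(_ y) := cover.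
  by rewrite in_setI in_setU in_setT in_set0; case: (y \in N h); case: (y \in N h').
rewrite Nh' setICr setUCr; split=> //; apply/eqP => hh'.
by have := cnbh_id h'; rewrite Nh' -hh' in_setC cnbh_id.
Qed.

Lemma mem_part_of h x : (x \in part_of e h) = (N x == N h) || (N x == ~: N h).
Proof.
rewrite /part_of in_setU inE; congr (_ || _); apply/bigcupP/idP => [[h']|].
  by rewrite gamma_pairE inE => /eqP <-.
by exists x; rewrite ?gamma_pairE ?inE.
Qed.

Lemma part_of_id h : h \in part_of e h.
Proof. by rewrite mem_part_of eqxx. Qed.

Lemma part_of_eq h x : x \in part_of e h -> part_of e x = part_of e h.
Proof.
rewrite mem_part_of => /orP[]/eqP Nx; apply/setP => y; rewrite !mem_part_of Nx //.
by rewrite setCK orbC.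
Qed.

Lemma partition_Tpartition : partition (Tpartition e) [set: T].
Proof.
apply/and3P; split.
- apply/eqP/setP => x; rewrite inE; apply/bigcupP.
  by exists (part_of e x); [apply: imset_f | apply: part_of_id].
- apply/trivIsetP => _ _ /imsetP[h _ ->] /imsetP[h' _ ->].
  apply: contraR; rewrite -setI_eq0 => /set0Pn[x /setIP[xh xh']].
  by rewrite -(part_of_eq xh) -(part_of_eq xh').
- by apply/imsetP => -[h _ /setP/(_ h)]; rewrite part_of_id inE.
Qed.

Definition part_rep h : T := odflt h [pick x in part_of e h].

Lemma part_rep_mem h : part_rep h \in part_of e h.
Proof. by rewrite /part_rep; case: pickP => [x|_] //=; rewrite part_of_id. Qed.

Lemma part_rep_eq h x : part_of e x = part_of e h -> part_rep x = part_rep h.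
Proof.
rewrite /part_rep => ->; case: pickP => [//|none].
by have := none h; rewrite part_of_id.
Qed.

Lemma sum_card_Tpartition : \sum_(P in Tpartition e) #|P| = #|T|.
Proof. by rewrite -(card_partition partition_Tpartition) cardsT. Qed.

End ClosedNeighbourhoods.

Lemma cnbh_modprod (G H : finType) (eG : rel G) (eH : rel H) :
  irreflexive eG -> irreflexive eH ->
  forall u v, (v \in cnbh (modprod eG eH) u) =
              ((v.1 \in cnbh eG u.1) == (v.2 \in cnbh eH u.2)).
Proof.
move=> irrG irrH [g h] [g' h']; rewrite !inE /= !xpair_eqE (eq_sym g) (eq_sym h).
have [<-|gg'] := eqVneq g g'; have [<-|hh'] := eqVneq h h';
  rewrite ?irrG ?irrH //=.
- by rewrite orbF.
- by case: (eG g g').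
- by case: (eG g g'); case: (eH h h').
Qed.

Definition block_adj n (l m : bool * 'I_n) : bool := (l.1 == m.1) == (l.2 == m.2).

Definition mate n (l : bool * 'I_n) : bool * 'I_n := (~~ l.1, l.2).

Section Blocks.
Variable n : nat.
Implicit Types l m : bool * 'I_n.

Lemma block_adjC l m : block_adj l m = block_adj m l.
Proof. by rewrite /block_adj (eq_sym l.1) (eq_sym l.2). Qed.

Lemma block_adj_refl l : block_adj l l.
Proof. by rewrite /block_adj !eqxx. Qed.

Lemma block_adj_matel l m : block_adj (mate l) m = ~~ block_adj l m.
Proof.
by case: l m => [s i] [t j]; rewrite /block_adj /=; case: s; case: t; case: (i == j).
Qed.

Lemma block_adj_mater l m : block_adj l (mate m) = ~~ block_adj l m.
Proof. by rewrite block_adjC block_adj_matel block_adjC. Qed.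

Lemma mateK : involutive (@mate n).
Proof. by case=> s i; rewrite /mate negbK. Qed.

Lemma block_adj_side l m : l.1 = m.1 -> block_adj l m = (l.2 == m.2).
Proof. by rewrite /block_adj => ->; rewrite eqxx; case: (l.2 == m.2). Qed.

Lemma mate_neq l : (l == mate l) = false.
Proof. by case: l => s i; rewrite /mate xpair_eqE; case: s. Qed.

Lemma eq_index_mate l m : (m.2 == l.2) = (m == l) || (m == mate l).
Proof.
by case: l m => [s i] [t j]; rewrite /mate !xpair_eqE /=; case: s; case: t; case: (j == i).
Qed.

Lemma cnbh_KnnM (T : finType) (lab : T -> bool * 'I_n) g g' :
  (g' \in cnbh (KnnM_graph lab) g) = block_adj (lab g) (lab g').
Proof.
rewrite inE /KnnM_graph (eq_sym g'); have [<-|_] //= := eqVneq g g'.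
  exact/esym/block_adj_refl.
by case: (lab g) (lab g') => [s i] [t j]; rewrite /block_adj xpair_eqE /=;
  case: (s == t); case: (i == j).
Qed.

Hypothesis n_gt2 : 2 < n.

Lemma exists_third (i j : 'I_n) : exists k : 'I_n, (k != i) && (k != j).
Proof.
have : 0 < #|~: [set i; j]|.
  have := cardsC [set i; j]; rewrite card_ord cards2.
  by have := n_gt2; case: (i != j); lia.
by case/card_gt0P => k; rewrite !inE negb_or; exists k.
Qed.

Lemma block_adj_path2 l l' a b :
  (l' == l) ==> (a == b) -> (l' == mate l) ==> (a != b) ->
  exists m, (block_adj l m == a) && (block_adj m l' == b).
Proof.
case: l l' => [s i] [t j] same_l mate_l; have [k /andP[ki kj]] := exists_third i j.
suff /hasP[m _ ok_m] : has (fun m => (block_adj (s, i) m == a) && (block_adj m (t, j) == b))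
    [:: (s, i); (t, j); (~~ t, j); (s, k); (~~ s, k)] by exists m.
move: same_l mate_l; rewrite /= /block_adj /mate /= !xpair_eqE /= !eqxx.
rewrite (eq_sym i k) (negbTE ki) (negbTE kj) (eq_sym j i) (eq_sym t).
by case: s; case: t; case: a; case: b; case: (i == j).
Qed.

End Blocks.

Arguments mateK {n}.

Section KnnMProduct.
Variables (n : nat) (TG TH : finType) (eG : rel TG) (eH : rel TH).
Variable lab : TG -> bool * 'I_n.
Hypothesis n_gt2 : 2 < n.
Hypothesis lab_onto : forall l, exists g, lab g == l.
Hypothesis eG_KnnM : eG =2 KnnM_graph lab.
Hypothesis eH_sym : symmetric eH.
Hypothesis eH_irr : irreflexive eH.

Local Notation V := (TG * TH)%type.
Local Notation e := (modprod eG eH).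
Local Notation N h := (cnbh eH h).

Definition block_rep l : TG := xchoose (lab_onto l).

Lemma lab_block_rep l : lab (block_rep l) = l.
Proof. exact/eqP/(xchooseP (lab_onto l)). Qed.

Lemma cnbh_prod u v :
  (v \in cnbh e u) = (block_adj (lab u.1) (lab v.1) == (v.2 \in N u.2)).
Proof.
have eG_irr : irreflexive eG by move=> g; rewrite eG_KnnM /KnnM_graph eqxx.
rewrite cnbh_modprod // -cnbh_KnnM; congr (_ == _).
by rewrite !inE eG_KnnM.
Qed.

Lemma cnbh_prodC u v : (v \in cnbh e u) = (u \in cnbh e v).
Proof. by rewrite !cnbh_prod block_adjC (mem_cnbhC eH_sym). Qed.

Definition antipodal (u v : V) : bool :=
  ((lab v.1 == lab u.1) && (N v.2 == ~: N u.2)) ||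
  ((lab v.1 == mate (lab u.1)) && (N v.2 == N u.2)).

Lemma antipodalC u v : antipodal u v = antipodal v u.
Proof.
rewrite /antipodal (eq_sym (lab v.1) (lab u.1)) (eq_sym (N v.2) (N u.2)).
rewrite (eq_sym (lab v.1) (mate _)) (inv_eq mateK).
by rewrite (eq_sym (N v.2) (~: _)) (inv_eq setCK).
Qed.

Lemma nreach2_prod u v : nreach e 2 u v = ~~ antipodal u v.
Proof.
rewrite nreach2; apply/existsP/idP => [[w /andP[]]|not_anti].
  rewrite !cnbh_prod (mem_cnbhC eH_sym w.2) /antipodal => uw wv.
  apply/negP => /orP[]/andP[/eqP lv /eqP Nv]; move: uw wv; rewrite lv Nv.
    by rewrite in_setC block_adjC; case: block_adj; case: (_ \in _).
  by rewrite block_adj_mater block_adjC; case: block_adj; case: (_ \in _).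
have [y ok_y] : exists y, ((lab v.1 == lab u.1) ==> ((y \in N u.2) == (y \in N v.2)))
    && ((lab v.1 == mate (lab u.1)) ==> ((y \in N u.2) != (y \in N v.2))).
  move: not_anti; rewrite /antipodal => /norP[not_comp not_mate].
  have [lv|_] := eqVneq (lab v.1) (lab u.1).
    move: not_comp; rewrite lv eqxx /= => /set_neqP[y Ny]; exists y.
    by rewrite mate_neq andbT; move: Ny; rewrite in_setC; do 2!case: (_ \in _).
  have [lv|_] := eqVneq (lab v.1) (mate (lab u.1)).
    by move: not_mate; rewrite lv eqxx /= => /set_neqP[y Ny]; exists y; rewrite eq_sym.
  by exists u.2.
have [m /andP[um mv]] := block_adj_path2 n_gt2 (elimT andP ok_y).1 (elimT andP ok_y).2.
by exists (block_rep m, y); rewrite !cnbh_prod lab_block_rep (mem_cnbhC eH_sym y) um.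
Qed.

Lemma antipodal_far u v : antipodal u v -> (u != v) && (v \notin cnbh e u).
Proof.
rewrite -[antipodal _ _]negbK -nreach2_prod => not2; apply/andP; split.
  by apply: contraNneq not2 => <-; apply: (@nreach_leq _ _ 0) => //=.
by apply: contra not2; rewrite -nreach1; apply: nreach_leq.
Qed.

Lemma antipodal_index u v : antipodal u v -> (lab v.1).2 = (lab u.1).2.
Proof. by case/orP=> /andP[/eqP-> _]. Qed.

Lemma nreach3_prod u v : nreach e 3 u v.
Proof.
have [k /andP[kv ku]] := exists_third n_gt2 (lab v.1).2 (lab u.1).2.
pose w := (block_rep (~~ (lab v.1).1, k), v.2).
have not_anti : ~~ antipodal u w.
  by apply: contra ku => /antipodal_index; rewrite lab_block_rep => <-.
rewrite nreachS; apply/existsP; exists w; rewrite nreach2_prod not_anti.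
by rewrite cnbh_prod lab_block_rep cnbh_id /block_adj /= (negbTE kv); case: (lab v.1).1.
Qed.

Definition pdist (u v : V) : nat :=
  if u == v then 0 else if v \in cnbh e u then 1 else if antipodal u v then 3 else 2.

Lemma card_prod_gt3 (u : V) : 3 < #|TG| * #|TH|.
Proof.
have : #|{: bool * 'I_n}| <= #|TG| by apply: leq_card (can_inj lab_block_rep).
rewrite card_prod card_bool card_ord => le_TG.
have : 0 < #|TH| by apply/card_gt0P; exists u.2.
by case: #|TH| => // m _; rewrite mulnS; lia.
Qed.

Lemma dist_prod u v : dist e u v = pdist u v.
Proof.
have card_V : 3 < #|{: V}| by rewrite card_prod; apply: card_prod_gt3 u.
rewrite /pdist; have [<-|uv] := eqVneq u v; first exact: dist_refl.
have [uv1|not1] := boolP (v \in cnbh e u).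
  by apply: (@dist_succ _ _ 0); rewrite ?nreach1 //; apply: ltn_trans card_V.
have [anti|not_anti] := boolP (antipodal u v).
  by apply: (@dist_succ _ _ 2); rewrite ?nreach3_prod ?nreach2_prod ?anti.
apply: (@dist_succ _ _ 1); rewrite ?nreach2_prod ?nreach1 //.
exact: ltn_trans card_V.
Qed.

Lemma pdistC u v : pdist u v = pdist v u.
Proof. by rewrite /pdist eq_sym cnbh_prodC antipodalC. Qed.

Lemma pdist_le3 u v : pdist u v <= 3.
Proof. by rewrite /pdist; do !case: ifP. Qed.

Lemma pdist_antipodal u v : antipodal u v -> pdist u v = 3.
Proof.
move=> anti; have /andP[/negbTE uv /negbTE uv1] := antipodal_far anti.
by rewrite /pdist uv uv1 anti.
Qed.

(* The map (block, N[h]) |-> (mate block, complement of N[h]) preserves all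
   distances to other vertices. *)
Definition mirror (u v : V) : bool :=
  ((lab v.1, N v.2) == (lab u.1, N u.2)) ||
  ((lab v.1, N v.2) == (mate (lab u.1), ~: N u.2)).

Lemma pdist_mirror u v z : mirror u v -> z != u -> z != v -> pdist u z = pdist v z.
Proof.
move=> mir zu zv; rewrite /pdist /antipodal !(eq_sym _ z) (negbTE zu) (negbTE zv).
rewrite !cnbh_prod; case/orP: mir => /eqP[-> ->] //.
rewrite block_adj_matel in_setC mateK setCK orbC.
by case: block_adj; case: (_ \in _).
Qed.

Lemma mirror_or_antipodalE u v :
  mirror u v || antipodal u v =
  ((lab v.1).2 == (lab u.1).2) && (v.2 \in part_of eH u.2).
Proof.
rewrite eq_index_mate mem_part_of /mirror /antipodal !xpair_eqE.
by case: (lab v.1 == _); case: (lab v.1 == _); case: (N v.2 == _); case: (N v.2 == _).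
Qed.

Lemma not_strongly_resolves_prod u v z :
  u != v -> (lab v.1).2 = (lab u.1).2 -> v.2 \in part_of eH u.2 ->
  z != u -> z != v -> ~~ strongly_resolves e z u v.
Proof.
move=> uv same_index same_part zu zv.
have /orP[mir|anti] : mirror u v || antipodal u v.
  by rewrite mirror_or_antipodalE same_index eqxx.
  apply: not_strongly_resolves_eq_dist.
  - exact: dist_gt0.
  - by apply: dist_gt0; rewrite eq_sym.
  - by rewrite !dist_prod (pdist_mirror mir).
apply: (@not_strongly_resolves_diametral _ _ 3) => //.
- by move=> a b; rewrite dist_prod pdist_le3.
- by rewrite dist_prod pdist_antipodal.
- by rewrite dist_prod pdist_antipodal // antipodalC.
Qed.

Lemma strongly_resolves_mate x y :
  pdist x y = 2 -> exists2 z, lab z.1 = mate (lab y.1) & strongly_resolves e z x y.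
Proof.
move=> dxy; have [/negbTE not_adj /negbTE not_anti] :
    y \notin cnbh e x /\ ~~ antipodal x y by move: dxy; rewrite /pdist; do !case: ifP.
pose z := (block_rep (mate (lab y.1)), y.2).
have anti : antipodal y z by rewrite /antipodal lab_block_rep !eqxx orbT.
have xz : x != z by apply: contraFneq not_anti => ->; rewrite antipodalC.
have adj : z \in cnbh e x.
  move: not_adj; rewrite !cnbh_prod lab_block_rep block_adj_mater.
  by case: block_adj; case: (_ \in _).
exists z; first exact: lab_block_rep.
rewrite /strongly_resolves !dist_prod (pdistC y x) dxy pdist_antipodal //.
by rewrite /pdist (negbTE xz) adj.
Qed.

Lemma strongly_resolves_adjacent x y :
  (lab x.1).1 = (lab y.1).1 -> y \in cnbh e x -> N x.2 != N y.2 ->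
  exists2 z, (lab z.1).1 != (lab x.1).1 & strongly_resolves e z x y.
Proof.
move=> side adj /set_neqP[y0 sep].
have [k /andP[kx ky]] := exists_third n_gt2 (lab x.1).2 (lab y.1).2.
pose z := (block_rep (~~ (lab x.1).1, k), y0).
have dist_z w : (lab w.1).1 = (lab x.1).1 -> (lab w.1).2 != k ->
    pdist w z = if y0 \in N w.2 then 1 else 2.
  move=> w_side wk.
  have wz : w != z.
    by apply/eqP => wz; move: w_side; rewrite wz lab_block_rep; case: (lab x.1).1.
  have not_anti : ~~ antipodal w z.
    by apply: contra wk => /antipodal_index; rewrite lab_block_rep /= => ->.
  rewrite /pdist (negbTE wz) (negbTE not_anti) cnbh_prod lab_block_rep /block_adj /=.
  by rewrite w_side (negbTE wk); case: (lab x.1).1; case: (y0 \in _).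
have xy : x != y by apply: contraNneq sep => ->.
exists z; first by rewrite lab_block_rep; case: (lab x.1).1.
rewrite /strongly_resolves !dist_prod (dist_z x) 1?eq_sym // (dist_z y) 1?eq_sym //.
rewrite (pdistC y) /pdist (negbTE xy) adj.
by move: sep; case: (y0 \in N x.2); case: (y0 \in N y.2).
Qed.

Lemma strongly_resolves_same_side x y :
  x != y -> (lab x.1).1 = (lab y.1).1 -> ~~ (mirror x y || antipodal x y) ->
  exists2 z, (lab z.1).1 != (lab x.1).1 & strongly_resolves e z x y.
Proof.
move=> xy side /norP[not_mir not_anti].
have [adj|not_adj] := boolP (y \in cnbh e x); last first.
  have [z zl res] : exists2 z, lab z.1 = mate (lab y.1) & strongly_resolves e z x y.
    apply: strongly_resolves_mate.
    by rewrite /pdist (negbTE xy) (negbTE not_adj) (negbTE not_anti).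
  by exists z => //; rewrite zl /= side; case: (lab y.1).1.
apply: strongly_resolves_adjacent => //; apply: contraNneq not_mir => Nxy.
move: adj; rewrite cnbh_prod Nxy cnbh_id eqb_id (block_adj_side side) => /eqP same_i.
rewrite /mirror Nxy; suff -> : lab y.1 = lab x.1 by rewrite eqxx.
by move: side same_i; case: (lab x.1) (lab y.1) => [s i] [t j] /= -> ->.
Qed.

Definition index_part (u : V) : 'I_n * {set TH} := ((lab u.1).2, part_of eH u.2).

Lemma strong_resolving_prod_ge S :
  strong_resolving_set e S -> #|TG| * #|TH| - n * kH eH <= #|S|.
Proof.
move=> resS; have inj : {in ~: S &, injective index_part}.
  apply: (strong_resolving_compl_inj (f := index_part) resS).
  move=> u v z uv [same_i same_part] zu zv.
  by apply: not_strongly_resolves_prod; rewrite // ?same_i ?same_part ?part_of_id.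
have sub : index_part @: (~: S) \subset setX [set: 'I_n] (Tpartition eH).
  by apply/subsetP => _ /imsetP[u _ ->]; rewrite in_setX in_setT imset_f.
have : #|~: S| <= n * kH eH.
  rewrite -(card_in_imset inj) (leq_trans (subset_leq_card sub)) //.
  by rewrite cardsX cardsT card_ord.
by have := cardsC S; rewrite card_prod; lia.
Qed.

Lemma strong_resolving_prod_le :
  exists2 S, strong_resolving_set e S & #|S| <= #|TG| * #|TH| - n * kH eH.
Proof.
pose I := [set u : V | (u.1 == block_rep (false, (lab u.1).2)) &&
                        (u.2 == part_rep eH u.2)].
have card_I : n * kH eH <= #|I|.
  have im_I : index_part @: I = setX [set: 'I_n] (Tpartition eH).
    apply/setP => -[i P]; rewrite in_setX in_setT /=.
    apply/imsetP/idP => [[u _ [_ ->]]|/imsetP[h _ ->]]; first exact: imset_f.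
    have rep_h := part_of_eq (part_rep_mem eH h).
    exists (block_rep (false, i), part_rep eH h).
      by rewrite inE lab_block_rep !eqxx /= (part_rep_eq rep_h) eqxx.
    by rewrite /index_part lab_block_rep rep_h.
  apply: leq_trans (leq_imset_card index_part I).
  by rewrite im_I cardsX cardsT card_ord.
exists (~: I); last by have := cardsC I; rewrite card_prod; lia.
apply: strong_resolving_setC => x y.
rewrite !inE => /andP[/eqP x1 /eqP x2] /andP[/eqP y1 /eqP y2] xy.
have side_x : (lab x.1).1 = false by rewrite x1 lab_block_rep.
have side_y : (lab y.1).1 = false by rewrite y1 lab_block_rep.
have [|z z_side res] := strongly_resolves_same_side xy (etrans side_x (esym side_y)).
  rewrite mirror_or_antipodalE; apply: contraNN xy => /andP[/eqP same_i same_part].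
  have eq1 : x.1 = y.1 by rewrite x1 y1 same_i.
  have eq2 : x.2 = y.2 by rewrite x2 y2 (part_rep_eq (part_of_eq same_part)).
  by apply/eqP; rewrite [x]surjective_pairing eq1 eq2 -surjective_pairing.
exists z => //; rewrite inE; apply/negP => /andP[/eqP z1 _].
by move: z_side; rewrite z1 lab_block_rep side_x.
Qed.

Theorem sdim_KnnM_modprod : sdim e = #|TG| * #|TH| - n * kH eH.
Proof. exact: sdim_eq strong_resolving_prod_ge strong_resolving_prod_le. Qed.

End KnnMProduct.

Lemma card_blocks n (T : finType) (lab : T -> bool * 'I_n) :
  #|T| = \sum_(i < n) (#|[set x | lab x == (false, i)]| + #|[set x | lab x == (true, i)]|).
Proof.
transitivity (\sum_(l : bool * 'I_n) #|[set x | lab x == l]|).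
  rewrite -sum1_card (partition_big lab xpredT) //.
  by apply: eq_bigr => l _; rewrite sum1dep_card.
rewrite -(pair_bigA _ (fun b i => #|[set x | lab x == (b, i)]|)) exchange_big.
by apply: eq_bigr => i _; rewrite big_bool addnC.
Qed.

Theorem mainTheorem11 (n : nat) (q r : 'I_n -> nat)
  (TG : finType) (eG : rel TG) (TH : finType) (eH : rel TH) :
  3 <= n ->
  (forall i, 0 < q i) -> (forall i, 0 < r i) ->
  is_KnnM q r eG ->
  simple_graph eH ->
  (forall h, ~~ universal eH h) ->
  sdim (modprod eG eH) =
    \sum_(i < n) ((q i + r i) * \sum_(P in Tpartition eH) #|P|) - n * kH eH.
Proof.
move=> n_gt2 q_gt0 r_gt0 [lab [card_X card_Y eG_KnnM]] [eH_sym eH_irr] _.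
have lab_onto l : exists g, lab g == l.
  case: l => [[] i]; [move: (r_gt0 i); rewrite -card_Y | move: (q_gt0 i); rewrite -card_X];
  by case/card_gt0P => g; rewrite inE; exists g.
rewrite -big_distrl /= sum_card_Tpartition.
under eq_bigr => i _ do rewrite -card_X -card_Y.
by rewrite -card_blocks (sdim_KnnM_modprod n_gt2 lab_onto).
Qed.
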